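(* Fix $\beta_0\in\mathbb{R}$ and $\beta=(\beta_1,\dots,\beta_d)\in\mathbb{R}^d$ with $\|\beta\|\ne0$. Let $f:\mathbb{R}^d\to\mathbb{R}$ be defined by $f(x)=f_0(\varphi(x))$, where $f_0:\mathbb{R}\to\mathbb{R}$ and $\varphi(x)=\beta_0+\langle\beta,x\rangle$. Let $g(x,x')=g_0(\|x-x'\|)$ be a smooth growth function, let $x\in\mathbb{R}^d$, and let $(w^*,z^* )$ with $w^*\ne z^*$ be such that $B^*(x)=\frac{|f(w^* )-f(z^* )|}{\|w^*-z^*\|\,g(x,z^* )}$. Then there exist $a,c\in\mathbb{R}$ such that, with $z_c:=x+\frac{c}{\|\beta\|}\beta$ and $w_a:=z_c+\frac{a}{\|\beta\|}\beta$, one has $\frac{|f(w_a)-f(z_c)|}{\|w_a-z_c\|\,g(x,z_c)}\ge B^*(x)$.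
   Context: $\mathbb{R}^d$ carries the Euclidean norm $\|\cdot\|$. A smooth growth function is $g(x,x')=g_0(\|x-x'\|)$ with $g_0:\mathbb{R}_{\ge0}\to\mathbb{R}_{\ge1}$ monotonically increasing, $g_0(0)=1$, $g_0(r_1+r_2)\le g_0(r_1)g_0(r_2)$. $B^*(x)$ denotes the $g$-smooth sensitivity of $f$ at $x$. *)

From HB Require Import structures.
From mathcomp Require Import all_boot all_order all_algebra.
From mathcomp Require Import all_classical all_reals all_analysis.
Set Implicit Arguments. Unset Strict Implicit. Unset Printing Implicit Defensive.
Import Order.TTheory GRing.Theory Num.Theory.
Local Open Scope ring_scope.
Local Open Scope classical_set_scope.

Definition edot (R : realType) (d : nat) (u v : 'rV[R]_d) : R :=
  \sum_(i < d) u ord0 i * v ord0 i.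

Definition enorm (R : realType) (d : nat) (u : 'rV[R]_d) : R :=
  Num.sqrt (edot u u).

(* g0 : R_{>=0} -> R_{>=1}, monotonically increasing, g0 0 = 1,
   submultiplicative. Only the values on [0, +oo) matter. *)
Definition smooth_growth0 (R : realType) (g0 : R -> R) : Prop :=
  [/\ (forall r, 0 <= r -> 1 <= g0 r),
      (forall r s, 0 <= r -> r <= s -> g0 r <= g0 s),
      g0 0 = 1 &
      (forall r1 r2, 0 <= r1 -> 0 <= r2 -> g0 (r1 + r2) <= g0 r1 * g0 r2)].

Definition growth (R : realType) (d : nat) (g0 : R -> R) (x x' : 'rV[R]_d) : R :=
  g0 (enorm (x - x')).

(* g-smooth sensitivity of f at x (as an extended real, the supremum may be +oo):
   B*(x) = sup_{w <> z} |f w - f z| / (||w - z|| g(x, z)). *)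
Definition smooth_sens (R : realType) (d : nat) (g0 : R -> R)
  (f : 'rV[R]_d -> R) (x : 'rV[R]_d) : \bar R :=
  ereal_sup [set r : \bar R | exists w z : 'rV[R]_d, w != z /\
     r = ((`|f w - f z| / (enorm (w - z) * growth g0 x z))%:E)].

From HB Require Import structures.
From mathcomp Require Import all_boot all_order all_algebra.
From mathcomp Require Import all_classical all_reals all_analysis.
From mathcomp Require Import lra.
Set Implicit Arguments. Unset Strict Implicit. Unset Printing Implicit Defensive.
Import Order.TTheory GRing.Theory Num.Theory.
Local Open Scope ring_scope.

(* f only sees the coordinate of its argument along beta.  Replacing z by
   the point zc of the line x + R beta with the same beta-coordinate, and w by
   zc shifted by the beta-offset of w from z, leaves f w and f z unchanged,
   while by Cauchy-Schwarz it can only shrink ||w - z|| and ||x - z||, hence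
   also g(x, z) since g0 is nondecreasing.  If w and z have the same
   beta-coordinate, B*(x) = 0 and any point of the line will do. *)

Section Euclidean.
Variables (R : realType) (d : nat).
Implicit Types (u v w : 'rV[R]_d).

Lemma edotC u v : edot u v = edot v u.
Proof. by apply: eq_bigr => i _; rewrite mulrC. Qed.

Lemma edotDl u v w : edot (u + v) w = edot u w + edot v w.
Proof. by rewrite /edot -big_split; apply: eq_bigr => i _; rewrite mxE mulrDl. Qed.

Lemma edotZl (a : R) u v : edot (a *: u) v = a * edot u v.
Proof. by rewrite /edot mulr_sumr; apply: eq_bigr => i _; rewrite mxE mulrA. Qed.

Lemma edotNl u v : edot (- u) v = - edot u v.
Proof. by rewrite -scaleN1r edotZl mulN1r. Qed.

Lemma edotDr u v w : edot w (u + v) = edot w u + edot w v.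
Proof. by rewrite edotC edotDl !(edotC w). Qed.

Lemma edotZr (a : R) u v : edot v (a *: u) = a * edot v u.
Proof. by rewrite edotC edotZl edotC. Qed.

Lemma edotNr u v : edot v (- u) = - edot v u.
Proof. by rewrite edotC edotNl edotC. Qed.

Lemma edotBr u v w : edot w (u - v) = edot w u - edot w v.
Proof. by rewrite edotDr edotNr. Qed.

Lemma edot0r v : edot v 0 = 0.
Proof. by rewrite /edot big1 // => i _; rewrite mxE mulr0. Qed.

Lemma edot_ge0 u : 0 <= edot u u.
Proof. by apply: sumr_ge0 => i _; rewrite -expr2 sqr_ge0. Qed.

Lemma edot_eq0 u : (edot u u == 0) = (u == 0).
Proof.
apply/idP/eqP => [|->]; last by rewrite edot0r.
rewrite psumr_eq0 => [/allP u0|i _]; last by rewrite -expr2 sqr_ge0.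
apply/rowP => i; rewrite mxE; apply/eqP.
by rewrite -sqrf_eq0 expr2; exact: implyP (u0 i (mem_index_enum i)) isT.
Qed.

Lemma enorm_ge0 u : 0 <= enorm u.
Proof. exact: sqrtr_ge0. Qed.

Lemma enorm_sqr u : enorm u ^+ 2 = edot u u.
Proof. by rewrite sqr_sqrtr // edot_ge0. Qed.

Lemma enormZ (a : R) u : enorm (a *: u) = `|a| * enorm u.
Proof. by rewrite /enorm edotZl edotZr mulrA -expr2 sqrtrM ?sqr_ge0 // sqrtr_sqr. Qed.

Lemma enormN u : enorm (- u) = enorm u.
Proof. by rewrite -scaleN1r enormZ normrN1 mul1r. Qed.

Lemma enormB u v : enorm (u - v) = enorm (v - u).
Proof. by rewrite -enormN opprB. Qed.

Lemma edot_CauchySchwarz u v : `|edot u v| <= enorm u * enorm v.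
Proof.
have [->|v_neq0] := eqVneq v 0.
  by rewrite edot0r normr0 mulr_ge0 ?enorm_ge0.
have vv_gt0 : 0 < edot v v by rewrite lt_def edot_eq0 v_neq0 edot_ge0.
pose t := edot u v / edot v v.
have tvv : t * edot v v = edot u v by rewrite divfK ?gt_eqF.
have : 0 <= edot (u - t *: v) (u - t *: v) := edot_ge0 _.
rewrite !(edotDl, edotDr, edotNl, edotNr, edotZl, edotZr) (edotC v u) tvv.
move=> uu_ge; have : 0 <= (edot u u - t * edot u v) * edot v v.
  by apply: mulr_ge0; lra.
rewrite mulrBl -mulrA (mulrC (edot u v)) mulrA tvv => sq_le.
rewrite -sqrtr_sqr /enorm -sqrtrM ?edot_ge0 // ler_wsqrtr //; lra.
Qed.

End Euclidean.

Definition along {R : realType} {d : nat} (beta y : 'rV[R]_d) (t : R) : 'rV[R]_d :=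
  y + (t / enorm beta) *: beta.

Definition coord_along {R : realType} {d : nat} (beta y : 'rV[R]_d) : R :=
  edot beta y / enorm beta.

Section Along.
Variables (R : realType) (d : nat) (beta : 'rV[R]_d).
Hypothesis beta_neq0 : enorm beta != 0.

Let beta_gt0 : 0 < enorm beta.
Proof. by rewrite lt_def beta_neq0 enorm_ge0. Qed.

Lemma edot_along y t : edot beta (along beta y t) = edot beta y + t * enorm beta.
Proof. by rewrite edotDr edotZr -enorm_sqr expr2 mulrA divfK. Qed.

Lemma edot_along_coord y u :
  edot beta (along beta y (coord_along beta u)) = edot beta y + edot beta u.
Proof. by rewrite edot_along divfK. Qed.

Lemma enorm_along_sub y t : enorm (along beta y t - y) = `|t|.
Proof.
by rewrite addrAC subrr add0r enormZ normrM normfV (gtr0_norm beta_gt0) divfK.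
Qed.

Lemma normr_coord_along_le u : `|coord_along beta u| <= enorm u.
Proof.
rewrite normrM normfV (gtr0_norm beta_gt0) ler_pdivrMr // mulrC.
exact: edot_CauchySchwarz.
Qed.

End Along.

Definition sens_quot {R : realType} {d : nat} (g0 : R -> R)
    (f : 'rV[R]_d -> R) (x w z : 'rV[R]_d) : R :=
  `|f w - f z| / (enorm (w - z) * growth g0 x z).

Lemma ler_wdiv_denomM (R : realFieldType) (n a a' b b' : R) :
  0 <= n -> 0 < a' -> a' <= a -> 0 < b' -> b' <= b -> n / (a * b) <= n / (a' * b').
Proof.
move=> n_ge0 a'_gt0 a'a b'_gt0 b'b; apply: ler_wpM2l => //.
have ab_gt0 := mulr_gt0 (lt_le_trans a'_gt0 a'a) (lt_le_trans b'_gt0 b'b).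
rewrite lef_pV2 ?posrE ?(mulr_gt0 a'_gt0 b'_gt0) //.
exact: ler_pM (ltW a'_gt0) (ltW b'_gt0) a'a b'b.
Qed.

Section SensQuot.
Variables (R : realType) (d : nat) (g0 : R -> R) (x : 'rV[R]_d).
Hypothesis g0_ge1 : forall r : R, 0 <= r -> 1 <= g0 r.

Lemma growth_gt0 y : 0 < growth g0 x y.
Proof. exact: lt_le_trans ltr01 (g0_ge1 (enorm_ge0 _)). Qed.

Lemma sens_quot_ge0 f w z : 0 <= sens_quot g0 f x w z.
Proof. by rewrite divr_ge0 ?mulr_ge0 ?enorm_ge0 // ltW // growth_gt0. Qed.

Variables (beta : 'rV[R]_d) (f : 'rV[R]_d -> R).
Hypotheses (beta_neq0 : enorm beta != 0)
  (g0_mono : forall r s : R, 0 <= r -> r <= s -> g0 r <= g0 s)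
  (f_ridge : forall y y', edot beta y = edot beta y' -> f y = f y').

Lemma sens_quot_le_along (w z : 'rV[R]_d) :
  let zc := along beta x (coord_along beta (z - x)) in
  let a := coord_along beta (w - z) in
  a != 0 -> sens_quot g0 f x w z <= sens_quot g0 f x (along beta zc a) zc.
Proof.
move=> zc a a_neq0.
have edot_zc : edot beta zc = edot beta z.
  by rewrite edot_along_coord // edotBr addrC subrK.
have f_wa : f (along beta zc a) = f w.
  by apply: f_ridge; rewrite edot_along_coord // edot_zc edotBr addrC subrK.
have g_zc : growth g0 x zc <= growth g0 x z.
  rewrite /growth enormB enorm_along_sub // [enorm (x - z)]enormB.
  exact: g0_mono _ _ (normr_ge0 _) (normr_coord_along_le beta_neq0 _).
rewrite /sens_quot f_wa (f_ridge edot_zc) enorm_along_sub //.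
apply: (ler_wdiv_denomM (normr_ge0 _)) g_zc.
- by rewrite normr_gt0.
- exact: normr_coord_along_le.
- exact: growth_gt0.
Qed.

End SensQuot.

Theorem mainTheorem14 (R : realType) (d : nat) (beta0 : R) (beta : 'rV[R]_d)
  (f0 : R -> R) (g0 : R -> R) (x wstar zstar : 'rV[R]_d) :
  enorm beta != 0 ->
  smooth_growth0 g0 ->
  let f := fun y : 'rV[R]_d => f0 (beta0 + edot beta y) in
  wstar != zstar ->
  smooth_sens g0 f x =
    ((`|f wstar - f zstar| / (enorm (wstar - zstar) * growth g0 x zstar))%:E) ->
  exists a c : R,
    let zc := x + (c / enorm beta) *: beta in
    let wa := zc + (a / enorm beta) *: beta in
    a != 0 /\
    (smooth_sens g0 f x <=
      ((`|f wa - f zc| / (enorm (wa - zc) * growth g0 x zc))%:E))%E.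
Proof.
move=> beta_neq0 [g0_ge1 g0_mono _ _] f _ ->.
have f_ridge y y' : edot beta y = edot beta y' -> f y = f y' by rewrite /f => ->.
have [a0|a_neq0] := eqVneq (coord_along beta (wstar - zstar)) 0.
  have f_wz : f wstar = f zstar.
    apply: f_ridge; apply/eqP; rewrite -subr_eq0 -edotBr.
    by move/eqP: a0; rewrite mulf_eq0 invr_eq0 (negPf beta_neq0) orbF.
  exists 1, 0; split; first exact: oner_neq0.
  by rewrite f_wz subrr normr0 mul0r lee_fin; exact: sens_quot_ge0.
exists (coord_along beta (wstar - zstar)), (coord_along beta (zstar - x)).
split => //; rewrite lee_fin; exact: sens_quot_le_along.
Qed.
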